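(* Let $\Gamma$ be an oriented path in $\mathbb C$ which is an interval of a straight line, let $f$ be a polynomial of degree at most $m\in\mathbb Z_+$, and let $g:\Gamma\to\mathbb C$ be a continuous map taking values in a line in $\mathbb C$ passing through $0$, such that $f(z)+g(z)\ne0$ for every $z\in\Gamma$. Then $w(f+g,\Gamma)<\frac{m+1}{2}$.
   Context: An oriented path $\Gamma$ with source $s(\Gamma)$ and end $e(\Gamma)$ is a set $\Gamma=\phi([a,b])$ for a continuous $\phi:[a,b]\to\mathbb C$ with $\phi(a)=s(\Gamma)$, $\phi(b)=e(\Gamma)$, $\phi$ injective on $(a,b)$. For continuous $F:\Gamma\to\mathbb C\setminus\{0\}$, choose such a parametrization $\phi$ and a continuous $\psi:[a,b]\to\mathbb R$ with $F(\phi(t))/|F(\phi(t))|=e^{i\psi(t)}$; the winding number of $F$ along $\Gamma$ is $w(F,\Gamma)=\frac{\psi(b)-\psi(a)}{2\pi}$ (independent of choices). *)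

From Stdlib Require Import Reals.
From Coquelicot Require Import Coquelicot.
Open Scope R_scope.

Fixpoint Cpown (z : C) (k : nat) : C :=
  match k with O => RtoC 1 | S k' => Cmult z (Cpown z k') end.

Fixpoint poly_eval (c : nat -> C) (m : nat) (z : C) : C :=
  match m with
  | O => c O
  | S m' => Cplus (poly_eval c m' z) (Cmult (c m) (Cpown z m))
  end.

Definition poly_deg_le (m : nat) (f : C -> C) : Prop :=
  exists c : nat -> C, forall z, f z = poly_eval c m z.

Definition seg_param (a b : C) (t : R) : C := Cplus a (Cmult (RtoC t) (Cminus b a)).

Definition on_seg (a b : C) (z : C) : Prop :=
  exists t : R, 0 <= t <= 1 /\ z = seg_param a b t.

Definition continuous_on_seg (a b : C) (g : C -> C) : Prop :=
  forall z, on_seg a b z ->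
    filterlim g (within (on_seg a b) (locally z)) (locally (g z)).

Definition is_arg_lift (F : C -> C) (a b : C) (psi : R -> R) : Prop :=
  (forall t, 0 <= t <= 1 ->
     filterlim psi (within (fun s => 0 <= s <= 1) (locally t)) (locally (psi t))) /\
  (forall t, 0 <= t <= 1 ->
     let w := F (seg_param a b t) in
     Cmult (RtoC (/ Cmod w)) w = (cos (psi t), sin (psi t))).

Definition winding_from_lift (psi : R -> R) : R := (psi 1 - psi 0) / (2 * PI).

From Stdlib Require Import Reals Lra Lia.
From Coquelicot Require Import Coquelicot.
Open Scope R_scope.

(* Write u = |u| e^{i th}.  Since g takes values in the real line R u, the function
   p(t) := Im (conj u * f(phi t)) equals Im (conj u * (f+g)(phi t)) = |u| |f+g| sin (psi t - th),
   and p is a real polynomial of degree at most m in the segment parameter t.  If psi increased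
   by (m+1) PI, then psi - th would pass through m+1 distinct multiples of PI, so p would have
   m+1 roots and vanish identically; psi would then be constant modulo PI, which a continuous
   function increasing by at least PI cannot be. *)

Fixpoint is_Rpoly (m : nat) (P : R -> R) : Prop :=
  match m with
  | O => exists c, forall t, P t = c
  | S m' => exists c Q, is_Rpoly m' Q /\ forall t, P t = c + t * Q t
  end.

Lemma is_Rpoly_ext m P Q : (forall t, P t = Q t) -> is_Rpoly m P -> is_Rpoly m Q.
Proof.
  destruct m as [|m]; simpl.
  - intros E [c Hc]; exists c; intro t; rewrite <- E; auto.
  - intros E [c [G [HG Hc]]]; exists c, G; split; auto; intro t; rewrite <- E; auto.
Qed.

Lemma is_Rpoly_const m c : is_Rpoly m (fun _ => c).
Proof.
  revert c; induction m as [|m IH]; intro c; simpl.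
  - exists c; auto.
  - exists c, (fun _ => 0); split; [apply IH | intro; ring].
Qed.

Lemma is_Rpoly_S m P : is_Rpoly m P -> is_Rpoly (S m) P.
Proof.
  revert P; induction m as [|m IH]; intros P HP.
  - destruct HP as [c Hc]; exists c, (fun _ => 0); split.
    + exists 0; auto.
    + intro t; rewrite Hc; ring.
  - destruct HP as [c [G [HG Hc]]]; exists c, G; split; [apply IH, HG | exact Hc].
Qed.

Lemma is_Rpoly_mult_id m P : is_Rpoly m P -> is_Rpoly (S m) (fun t => t * P t).
Proof. intro HP; exists 0, P; split; [exact HP | intro; ring]. Qed.

Lemma is_Rpoly_plus m P Q :
  is_Rpoly m P -> is_Rpoly m Q -> is_Rpoly m (fun t => P t + Q t).
Proof.
  revert P Q; induction m as [|m IH]; intros P Q HP HQ.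
  - destruct HP as [c Hc], HQ as [d Hd]; exists (c + d); intro; rewrite Hc, Hd; auto.
  - destruct HP as [c [G [HG Hc]]], HQ as [d [G' [HG' Hd]]].
    exists (c + d), (fun t => G t + G' t); split; auto.
    intro t; rewrite Hc, Hd; ring.
Qed.

Lemma is_Rpoly_scal m k P : is_Rpoly m P -> is_Rpoly m (fun t => k * P t).
Proof.
  revert P; induction m as [|m IH]; intros P HP.
  - destruct HP as [c Hc]; exists (k * c); intro; rewrite Hc; auto.
  - destruct HP as [c [G [HG Hc]]].
    exists (k * c), (fun t => k * G t); split; auto.
    intro t; rewrite Hc; ring.
Qed.

Lemma is_Rpoly_factor m P t0 : is_Rpoly (S m) P ->
  exists Q, is_Rpoly m Q /\ forall t, P t - P t0 = (t - t0) * Q t.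
Proof.
  revert P; induction m as [|m IH]; intros P HP.
  - destruct HP as [c [G [[g Hg] Hc]]].
    exists (fun _ => g); split; [exists g; auto|].
    intro t; rewrite !Hc, !Hg; ring.
  - destruct HP as [c [G [HG Hc]]].
    destruct (IH G HG) as [QG [HQG EQ]].
    exists (fun t => G t + t0 * QG t); split.
    + apply is_Rpoly_plus; [exact HG | apply is_Rpoly_scal, is_Rpoly_S, HQG].
    + intro t; rewrite !Hc.
      replace (c + t * G t - (c + t0 * G t0))
        with ((t - t0) * G t + t0 * (G t - G t0)) by ring.
      rewrite EQ; ring.
Qed.

Lemma is_Rpoly_roots m P (ts : nat -> R) : is_Rpoly m P ->
  (forall i j, (i <= m)%nat -> (j <= m)%nat -> ts i = ts j -> i = j) ->
  (forall i, (i <= m)%nat -> P (ts i) = 0) ->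
  forall t, P t = 0.
Proof.
  revert P ts; induction m as [|m IH]; intros P ts HP Hinj Hroot t.
  - destruct HP as [c Hc]. rewrite Hc, <- (Hc (ts O)). apply Hroot; lia.
  - destruct (is_Rpoly_factor m P (ts O) HP) as [Q [HQ EQ]].
    assert (P0 : P (ts O) = 0) by (apply Hroot; lia).
    assert (Q0 : forall t, Q t = 0).
    { apply (IH Q (fun i => ts (S i)) HQ).
      - intros i j Hi Hj E; apply Nat.succ_inj, Hinj; auto; lia.
      - intros i Hi.
        assert (Hne : ts (S i) - ts O <> 0).
        { intro E; assert (S i = O) by (apply Hinj; lia || lra). lia. }
        apply (Rmult_eq_reg_l (ts (S i) - ts O)); auto.
        rewrite <- EQ, P0, Hroot by lia. ring. }
    specialize (EQ t); rewrite Q0, P0 in EQ. lra.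
Qed.

Definition is_Cpoly (m : nat) (F : R -> C) : Prop :=
  is_Rpoly m (fun t => Re (F t)) /\ is_Rpoly m (fun t => Im (F t)).

Lemma is_Cpoly_ext m F G : (forall t, F t = G t) -> is_Cpoly m F -> is_Cpoly m G.
Proof.
  intros E [HR HI]; split; [eapply is_Rpoly_ext, HR | eapply is_Rpoly_ext, HI];
  intro t; cbv beta; rewrite E; reflexivity.
Qed.

Lemma is_Cpoly_const m c : is_Cpoly m (fun _ => c).
Proof. split; apply is_Rpoly_const. Qed.

Lemma is_Cpoly_S m F : is_Cpoly m F -> is_Cpoly (S m) F.
Proof. intros [HR HI]; split; apply is_Rpoly_S; assumption. Qed.

Lemma is_Cpoly_mult_id m F : is_Cpoly m F -> is_Cpoly (S m) (fun t => Cmult (RtoC t) (F t)).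
Proof.
  intros [HR HI]; split;
  [eapply is_Rpoly_ext, is_Rpoly_mult_id, HR | eapply is_Rpoly_ext, is_Rpoly_mult_id, HI];
  intro t; unfold Re, Im, Cmult, RtoC; simpl; ring.
Qed.

Lemma is_Cpoly_plus m F G :
  is_Cpoly m F -> is_Cpoly m G -> is_Cpoly m (fun t => Cplus (F t) (G t)).
Proof. intros [FR FI] [GR GI]; split; apply is_Rpoly_plus; assumption. Qed.

Lemma is_Cpoly_scal m c F : is_Cpoly m F -> is_Cpoly m (fun t => Cmult c (F t)).
Proof.
  intros [HR HI]; split.
  - apply is_Rpoly_ext with (fun t => Re c * Re (F t) + (- Im c) * Im (F t)).
    + intro t; unfold Re, Im, Cmult; simpl; ring.
    + apply is_Rpoly_plus; apply is_Rpoly_scal; assumption.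
  - apply is_Rpoly_ext with (fun t => Re c * Im (F t) + Im c * Re (F t)).
    + intro t; unfold Re, Im, Cmult; simpl; ring.
    + apply is_Rpoly_plus; apply is_Rpoly_scal; assumption.
Qed.

Lemma is_Cpoly_Cpown_seg a b k : is_Cpoly k (fun t => Cpown (seg_param a b t) k).
Proof.
  induction k as [|k IH]; simpl.
  - apply is_Cpoly_const.
  - apply is_Cpoly_ext with
      (fun t => Cplus (Cmult a (Cpown (seg_param a b t) k))
                      (Cmult (RtoC t) (Cmult (Cminus b a) (Cpown (seg_param a b t) k)))).
    + intro t; unfold seg_param; ring.
    + apply is_Cpoly_plus.
      * apply is_Cpoly_S, is_Cpoly_scal, IH.
      * apply is_Cpoly_mult_id, is_Cpoly_scal, IH.
Qed.

Lemma is_Cpoly_poly_eval_seg a b c m :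
  is_Cpoly m (fun t => poly_eval c m (seg_param a b t)).
Proof.
  induction m as [|m IH]; simpl.
  - apply is_Cpoly_const.
  - apply is_Cpoly_plus.
    + apply is_Cpoly_S, IH.
    + apply is_Cpoly_scal, (is_Cpoly_Cpown_seg a b (S m)).
Qed.

Lemma unit_circle_cos_sin x y : x ^ 2 + y ^ 2 = 1 -> exists th, x = cos th /\ y = sin th.
Proof.
  intro E.
  assert (Hx : -1 <= x <= 1) by (split; nra).
  assert (Hs : sin (acos x) = Rabs y).
  { rewrite sin_acos by exact Hx. rewrite <- sqrt_Rsqr_abs. f_equal. unfold Rsqr; lra. }
  destruct (Rle_dec 0 y) as [Hy | Hy].
  - exists (acos x); rewrite cos_acos, Hs, Rabs_pos_eq by lra; auto.
  - exists (- acos x); rewrite cos_neg, sin_neg, cos_acos, Hs, Rabs_left by lra; split; lra.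
Qed.

Lemma Cpolar (u : C) : exists th, u = (Cmod u * cos th, Cmod u * sin th).
Proof.
  destruct (Ceq_dec u 0) as [-> | Hu].
  - exists 0; rewrite Cmod_0; apply injective_projections; simpl; ring.
  - assert (Hr : 0 < Cmod u) by (apply Cmod_gt_0, Hu).
    destruct (unit_circle_cos_sin (Re u / Cmod u) (Im u / Cmod u)) as [th [Hc Hs]].
    { assert (E : Cmod u ^ 2 = Re u ^ 2 + Im u ^ 2)
        by (unfold Cmod; rewrite pow2_sqrt; [reflexivity | nra]).
      replace ((Re u / Cmod u) ^ 2 + (Im u / Cmod u) ^ 2)
        with ((Re u ^ 2 + Im u ^ 2) / Cmod u ^ 2) by (field; lra).
      rewrite <- E; field; lra. }
    exists th; rewrite <- Hc, <- Hs.
    apply injective_projections; unfold Re, Im; simpl; field; lra.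
Qed.

Definition continuous_on_unit (psi : R -> R) : Prop :=
  forall t, 0 <= t <= 1 ->
    filterlim psi (within (fun s => 0 <= s <= 1) (locally t)) (locally (psi t)).

Definition clamp01 (x : R) : R := Rmax 0 (Rmin 1 x).

Lemma clamp01_in x : 0 <= clamp01 x <= 1.
Proof. unfold clamp01, Rmax, Rmin; repeat destruct Rle_dec; lra. Qed.

Lemma clamp01_id x : 0 <= x <= 1 -> clamp01 x = x.
Proof. unfold clamp01, Rmax, Rmin; repeat destruct Rle_dec; lra. Qed.

Lemma clamp01_lipschitz x y : Rabs (clamp01 y - clamp01 x) <= Rabs (y - x).
Proof.
  unfold clamp01, Rmax, Rmin; repeat destruct Rle_dec;
  repeat match goal with |- context [Rabs ?z] => destruct (Rcase_abs z);
     [rewrite (Rabs_left z) by lra | rewrite (Rabs_right z) by lra] end; lra.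
Qed.

(* Extending [psi] by [psi o clamp01] gives a function continuous on all of [R]. *)
Lemma IVT_unit (psi : R -> R) : continuous_on_unit psi ->
  forall v, psi 0 <= v <= psi 1 -> {t | 0 <= t <= 1 /\ psi t = v}.
Proof.
  intros Hpsi v Hv.
  set (h x := psi (clamp01 x) - v).
  assert (Ch : continuity h).
  { intro x; apply continuity_pt_minus; [| apply continuity_pt_const; intros ? ?; reflexivity].
    apply continuity_pt_filterlim.
    apply filterlim_comp with (G := within (fun s => 0 <= s <= 1) (locally (clamp01 x))).
    - intros P [eps HP]; exists eps; intros y Hy; apply HP; [| apply clamp01_in].
      eapply Rle_lt_trans; [apply clamp01_lipschitz | exact Hy].
    - apply Hpsi, clamp01_in. }
  destruct (IVT_cor h 0 1 Ch ltac:(lra)) as [t [Ht Et]].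
  { unfold h; rewrite !clamp01_id by lra; nra. }
  exists t; split; [exact Ht |].
  unfold h in Et; rewrite clamp01_id in Et by exact Ht; lra.
Qed.

Lemma IVT_unit_family (psi : R -> R) (m : nat) (v : nat -> R) : continuous_on_unit psi ->
  (forall j, (j <= m)%nat -> psi 0 <= v j <= psi 1) ->
  exists ts : nat -> R, forall j, (j <= m)%nat -> 0 <= ts j <= 1 /\ psi (ts j) = v j.
Proof.
  intros Hpsi Hv.
  exists (fun j => proj1_sig (IVT_unit psi Hpsi (v (min j m)) (Hv _ (Nat.le_min_r j m)))).
  intros j Hj.
  destruct (IVT_unit psi Hpsi (v (min j m)) (Hv _ (Nat.le_min_r j m))) as [t Ht]; simpl.
  rewrite Nat.min_l in Ht by exact Hj; exact Ht.
Qed.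

Lemma multiple_of_PI_between x : exists n : Z, x <= IZR n * PI <= x + PI.
Proof.
  pose proof PI_RGT_0 as HPI.
  destruct (archimed (x / PI)) as [H1 H2].
  exists (up (x / PI)).
  assert (Ex : x = x / PI * PI) by (field; lra).
  set (q := x / PI) in *.
  rewrite Ex; split; nra.
Qed.

Lemma phase_increase_lt m (p rho psi : R -> R) th :
  is_Rpoly m p -> continuous_on_unit psi ->
  (forall t, 0 <= t <= 1 -> 0 < rho t /\ p t = rho t * sin (psi t - th)) ->
  psi 1 - psi 0 < (INR m + 1) * PI.
Proof.
  intros Hp Hpsi Hrho.
  pose proof PI_RGT_0 as HPI; pose proof (pos_INR m) as Hm.
  apply Rnot_le_lt; intro Hge.
  destruct (multiple_of_PI_between (psi 0 - th)) as [n0 Hn0].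
  set (v j := th + IZR (n0 + Z.of_nat j) * PI).
  destruct (IVT_unit_family psi m v Hpsi) as [ts Hts].
  { intros j Hj; unfold v; rewrite plus_IZR, <- INR_IZR_INZ.
    pose proof (le_INR _ _ Hj); pose proof (pos_INR j); split; nra. }
  assert (p_zero : forall t, p t = 0).
  { apply (is_Rpoly_roots m p ts Hp).
    - intros i j Hi Hj E.
      destruct (Hts i Hi) as [_ Ei], (Hts j Hj) as [_ Ej].
      rewrite E, Ej in Ei; unfold v in Ei.
      apply Znat.Nat2Z.inj, (Z.add_reg_l n0), eq_IZR, (Rmult_eq_reg_r PI); lra.
    - intros j Hj; destruct (Hts j Hj) as [Hin Ej].
      rewrite (proj2 (Hrho _ Hin)), Ej, sin_eq_0_1; [ring |].
      exists (n0 + Z.of_nat j)%Z; unfold v; ring. }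
  assert (sin_zero : forall t, 0 <= t <= 1 -> sin (psi t - th) = 0).
  { intros t Ht; destruct (Hrho t Ht) as [Hr Ep]; rewrite p_zero in Ep.
    symmetry in Ep; apply Rmult_integral in Ep; destruct Ep; [lra | assumption]. }
  destruct (IVT_unit psi Hpsi (psi 0 + PI / 2)) as [t1 [Ht1 E1]]; [split; nra |].
  apply (cos_sin_0 (psi 0 - th)); split.
  - rewrite cos_sin; replace (PI / 2 + (psi 0 - th)) with (psi t1 - th) by lra.
    apply sin_zero, Ht1.
  - apply sin_zero; lra.
Qed.

Lemma Im_Cconj_mult_polar ru rw th phi :
  Im (Cmult (Cconj (ru * cos th, ru * sin th)) (rw * cos phi, rw * sin phi))
  = ru * rw * sin (phi - th).
Proof. rewrite sin_minus; unfold Im, Cconj, Cmult; simpl; ring. Qed.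

Lemma polar_of_direction (w : C) phi : w <> 0 ->
  Cmult (RtoC (/ Cmod w)) w = (cos phi, sin phi) -> w = (Cmod w * cos phi, Cmod w * sin phi).
Proof.
  intros Hw E.
  assert (Hr : 0 < Cmod w) by (apply Cmod_gt_0, Hw).
  pose proof (f_equal fst E) as Ere; pose proof (f_equal snd E) as Eim.
  unfold Cmult, RtoC in Ere, Eim; simpl in Ere, Eim.
  apply injective_projections; simpl; [rewrite <- Ere | rewrite <- Eim]; field; lra.
Qed.

Theorem lemma5p1 (a b : C) (m : nat) (f g : C -> C) (u : C) :
  a <> b ->
  poly_deg_le m f ->
  continuous_on_seg a b g ->
  u <> RtoC 0 ->
  (forall z, on_seg a b z -> exists r : R, g z = Cmult (RtoC r) u) ->
  (forall z, on_seg a b z -> Cplus (f z) (g z) <> RtoC 0) ->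
  forall psi : R -> R, is_arg_lift (fun z => Cplus (f z) (g z)) a b psi ->
    winding_from_lift psi < (INR m + 1) / 2.
Proof.
  intros _ [c Hf] _ Hu Hline Hnz psi [Hpsi Hlift].
  destruct (Cpolar u) as [th Hth].
  set (F t := Cplus (f (seg_param a b t)) (g (seg_param a b t))).
  assert (Hp : is_Rpoly m (fun t => Im (Cmult (Cconj u) (f (seg_param a b t))))).
  { assert (HC : is_Cpoly m (fun t => Cmult (Cconj u) (f (seg_param a b t)))).
    { apply is_Cpoly_ext with (2 := is_Cpoly_scal _ (Cconj u) _ (is_Cpoly_poly_eval_seg a b c m)).
      intro t; rewrite Hf; reflexivity. }
    exact (proj2 HC). }
  assert (Hphase : psi 1 - psi 0 < (INR m + 1) * PI).
  { apply (phase_increase_lt m _ (fun t => Cmod u * Cmod (F t)) psi th Hp Hpsi).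
    intros t Ht.
    assert (Hon : on_seg a b (seg_param a b t)) by (exists t; split; auto).
    destruct (Hline _ Hon) as [r Hr].
    assert (HF : F t <> 0) by apply Hnz, Hon.
    split.
    - apply Rmult_lt_0_compat; apply Cmod_gt_0; assumption.
    - replace (Im (Cmult (Cconj u) (f (seg_param a b t))))
        with (Im (Cmult (Cconj u) (F t)))
        by (unfold F; rewrite Hr; unfold Im, Cconj, Cmult, Cplus, RtoC; simpl; ring).
      rewrite Hth at 1; rewrite (polar_of_direction (F t) (psi t) HF (Hlift t Ht)) at 1.
      apply Im_Cconj_mult_polar. }
  pose proof PI_RGT_0.
  unfold winding_from_lift.
  replace ((INR m + 1) / 2) with ((INR m + 1) * PI / (2 * PI)) by (field; lra).
  apply Rmult_lt_compat_r; [apply Rinv_0_lt_compat; lra | exact Hphase].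
Qed.
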